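(* Under the Setting below, for every $k\ge 0$ the iterates of Algorithm 1 satisfy $y^{k+1}\in X$, $\|y^{k+1}\|_0\le\|x^k\|_0$, $f(y^{k+1})\le f(x^k)$, and $$H(x^{k+1})+\frac{\mu}{2}\|x^{k+1}-y^{k+1}\|^2\le H(x^k).$$
   Context: Setting. Let $\lambda>0$, $l,u\in\mathbb{R}^n$ with $l\le u$ componentwise, $X=\{x\in\mathbb{R}^n: l\le x\le u\}$, and $\delta_X$ the indicator function of $X$ ($0$ on $X$, $+\infty$ outside). For $x\in\mathbb{R}^n$, $\|x\|_0$ is the number of nonzero components of $x$ and $I(x)=\{i: x_i=0\}$. Let $f:\mathbb{R}^n\to\mathbb{R}$ be convex and differentiable, bounded from below on $X$, with $\nabla f$ $L$-Lipschitz continuous on $X$ ($L>0$). Define $H(x)=\lambda\|x\|_0+f(x)+\delta_X(x)$. Algorithm 1. Choose $\mu>0$, extrapolation weights $0\le\omega_k\le\omega<1$, and a starting point $x^0\in X$; set $x^{-1}=x^0$. For $k=0,1,2,\dots$: define $y^{k+1}\in\mathbb{R}^n$ by $y^{k+1}_i=x^k_i+\omega_k(x^k_i-x^{k-1}_i)$ for $i\notin I(x^k)$ and $y^{k+1}_i=x^k_i\,(=0)$ for $i\in I(x^k)$ (extrapolation only on the support of $x^k$); if $\langle y^{k+1}-x^k,\nabla f(y^{k+1})\rangle>0$ or $y^{k+1}\notin X$, reset $y^{k+1}:=x^k$; then take any $$x^{k+1}\in\arg\min_{x\in X}\ \lambda\|x\|_0+\frac{L}{2}\Big\|x-y^{k+1}+\frac1L\nabla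 f(y^{k+1})\Big\|^2+\frac{\mu}{2}\|x-y^{k+1}\|^2 .$$ *)

From Stdlib Require Import Reals.
From mathcomp Require Import all_boot.
Set Implicit Arguments. Unset Strict Implicit. Unset Printing Implicit Defensive.

Local Open Scope R_scope.

Definition vec (n : nat) := 'I_n -> R.

Definition vadd n (x y : vec n) : vec n := fun i => x i + y i.
Definition vsub n (x y : vec n) : vec n := fun i => x i - y i.
Definition vscale n (a : R) (x : vec n) : vec n := fun i => a * x i.

Definition inner n (x y : vec n) : R := \big[Rplus/0]_(i < n) (x i * y i).
Definition norm n (x : vec n) : R := sqrt (inner x x).

Definition Req_b (a b : R) : bool := if Req_EM_T a b then true else false.
Definition l0 n (x : vec n) : nat := (\sum_(i < n) (if Req_b (x i) 0 then 0 else 1))%N.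

Definition zero_idx n (x : vec n) (i : 'I_n) : Prop := x i = 0.

Definition in_box n (l u x : vec n) : Prop := forall i, l i <= x i <= u i.
Definition Rle_b (a b : R) : bool := if Rle_dec a b then true else false.
Definition in_box_b n (l u x : vec n) : bool :=
  [forall i, Rle_b (l i) (x i) && Rle_b (x i) (u i)].

(* extended reals (values in R ∪ {+oo}) for H, which contains delta_X *)
Inductive ereal := Fin (r : R) | PInf.
Definition ele (a b : ereal) : Prop :=
  match a, b with
  | _, PInf => True
  | PInf, Fin _ => False
  | Fin r, Fin s => r <= s
  end.
Definition eadd (a : ereal) (r : R) : ereal :=
  match a with Fin s => Fin (s + r) | PInf => PInf end.

Definition Hfun n (lam : R) (f : vec n -> R) (l u : vec n) (x : vec n) : ereal :=
  if in_box_b l u x then Fin (lam * INR (l0 x) + f x) else PInf.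

Definition convex_fun n (f : vec n -> R) : Prop :=
  forall (x y : vec n) (t : R), 0 <= t <= 1 ->
    f (vadd (vscale t x) (vscale (1 - t) y)) <= t * f x + (1 - t) * f y.

Definition has_gradient n (f : vec n -> R) (g : vec n -> vec n) : Prop :=
  forall x : vec n, forall eps : R, 0 < eps -> exists delta : R, 0 < delta /\
    forall y : vec n, norm (vsub y x) < delta ->
      Rabs (f y - f x - inner (g x) (vsub y x)) <= eps * norm (vsub y x).

(* objective of the subproblem defining x^{k+1} (without delta_X) *)
Definition subobj n (lam L mu : R) (g : vec n -> vec n) (y x : vec n) : R :=
  lam * INR (l0 x)
  + L / 2 * (norm (fun i => x i - y i + / L * g y i)) ^ 2
  + mu / 2 * (norm (vsub x y)) ^ 2.

(* the extrapolated point before the safeguard: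
   ytilde_i = xk_i + w (xk_i - xkm1_i) if xk_i <> 0, and xk_i otherwise *)
Definition extrap n (w : R) (xk xkm1 : vec n) : vec n :=
  fun i => if Req_b (xk i) 0 then xk i else xk i + w * (xk i - xkm1 i).

From Stdlib Require Import Reals Lra Psatz Classical FunctionalExtensionality.
From mathcomp Require Import all_boot.
Set Implicit Arguments. Unset Strict Implicit.
Local Open Scope R_scope.

(* The safeguard either resets y^{k+1} to x^k or accepts an extrapolated point
   ytilde in the box with <ytilde - x^k, grad f(ytilde)> <= 0; in the latter case
   the gradient inequality of the convex f at ytilde gives f(ytilde) <= f(x^k),
   and extrapolating only on the support of x^k creates no new nonzero entry.
   For the decrease, x^{k+1} beats the feasible point y^{k+1} in the subproblem;
   expanding the squares and using the descent lemma
   f(x) <= f(y) + <grad f(y), x - y> + L/2 |x - y|^2 on the box yields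
   lam |x^{k+1}|_0 + f(x^{k+1}) + mu/2 |x^{k+1} - y^{k+1}|^2
     <= lam |y^{k+1}|_0 + f(y^{k+1}) <= H(x^k). *)

Section RealSums.
Variable n : nat.
Implicit Types F G : 'I_n -> R.

Lemma sumR_add F G :
  \big[Rplus/0]_(i < n) (F i + G i) =
  \big[Rplus/0]_(i < n) F i + \big[Rplus/0]_(i < n) G i.
Proof. by apply: (big_rec3 (fun a b c => a = b + c)) => [|i a b c _ ->]; lra. Qed.

Lemma sumR_scale c F :
  \big[Rplus/0]_(i < n) (c * F i) = c * \big[Rplus/0]_(i < n) F i.
Proof. by apply: (big_rec2 (fun a b => a = c * b)) => [|i a b _ ->]; lra. Qed.

Lemma sumR_ge0 F : (forall i, 0 <= F i) -> 0 <= \big[Rplus/0]_(i < n) F i.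
Proof.
by move=> F_ge0; apply: (big_rec (fun a => 0 <= a)) => [|i a _]; [lra | have := F_ge0 i; lra].
Qed.

End RealSums.

Section InnerProduct.
Variable n : nat.
Implicit Types x y d : vec n.

Lemma inner_comm x y : inner x y = inner y x.
Proof. by apply: eq_bigr => i _; rewrite Rmult_comm. Qed.

Lemma inner_ge0 x : 0 <= inner x x.
Proof. by apply: sumR_ge0 => i; nra. Qed.

Lemma norm_ge0 x : 0 <= norm x.
Proof. exact: sqrt_pos. Qed.

Lemma norm_sqr x : norm x ^ 2 = inner x x.
Proof. exact/pow2_sqrt/inner_ge0. Qed.

Lemma inner_subl x y d : inner (vsub x y) d = inner x d - inner y d.
Proof.
have -> : inner x d - inner y d = inner x d + -1 * inner y d by ring.
by rewrite /inner -sumR_scale -sumR_add; apply: eq_bigr => i _; rewrite /vsub; ring.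
Qed.

Lemma inner_scaler c x d : inner x (vscale c d) = c * inner x d.
Proof. by rewrite /inner -sumR_scale; apply: eq_bigr => i _; rewrite /vscale; ring. Qed.

Lemma norm_scale c d : norm (vscale c d) = Rabs c * norm d.
Proof.
rewrite /norm inner_scaler inner_comm inner_scaler -Rmult_assoc.
by rewrite sqrt_mult -?Rsqr_def -?sqrt_Rsqr_abs //; [exact: Rle_0_sqr | exact: inner_ge0].
Qed.

Lemma norm_add_scale_sqr d c x :
  norm (vadd d (vscale c x)) ^ 2 =
  norm d ^ 2 + 2 * c * inner d x + c ^ 2 * norm x ^ 2.
Proof.
rewrite !norm_sqr /inner -!sumR_scale -!sumR_add.
by apply: eq_bigr => i _; rewrite /vadd /vscale; ring.
Qed.

(* t |-> |x - t y|^2 is a nonnegative quadratic; if |y| = 0 it is affine and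
   can only stay nonnegative when <x, y> = 0. *)
Lemma inner_sqr_le x y : inner x y ^ 2 <= inner x x * inner y y.
Proof.
have quad_ge0 t : 0 <= inner x x - 2 * t * inner x y + t ^ 2 * inner y y.
  have := pow2_ge_0 (norm (vadd x (vscale (- t) y))).
  by rewrite norm_add_scale_sqr !norm_sqr; nra.
have := inner_ge0 x; have := inner_ge0 y.
case: (Req_dec (inner y y) 0) => [yy0 _ xx_ge0 | yy_neq0 yy_ge0 _].
  case: (Req_dec (inner x y) 0) => [-> | xy_neq0]; first by rewrite yy0; lra.
  have := quad_ge0 ((inner x x + 1) / (2 * inner x y)).
  have -> : inner x x - 2 * ((inner x x + 1) / (2 * inner x y)) * inner x y +
            ((inner x x + 1) / (2 * inner x y)) ^ 2 * inner y y = -1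
    by rewrite yy0; field.
  lra.
have := quad_ge0 (inner x y / inner y y).
have -> : inner x x - 2 * (inner x y / inner y y) * inner x y +
          (inner x y / inner y y) ^ 2 * inner y y =
          (inner x x * inner y y - inner x y ^ 2) / inner y y by field.
move=> /(Rmult_le_compat_r (inner y y)) => /(_ yy_ge0).
by rewrite Rmult_0_l /Rdiv Rmult_assoc Rinv_l // Rmult_1_r; lra.
Qed.

Lemma inner_le_mul_norm x y : inner x y <= norm x * norm y.
Proof.
rewrite /norm -sqrt_mult; try exact: inner_ge0.
case: (Rle_lt_dec (inner x y) 0) => [xy_le0 | xy_gt0].
  by have := sqrt_pos (inner x x * inner y y); lra.
rewrite -(sqrt_pow2 (inner x y)); last lra.
exact/sqrt_le_1_alt/inner_sqr_le.
Qed.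

End InnerProduct.

Section Gradient.
Variables (n : nat) (f : vec n -> R) (g : vec n -> vec n).
Hypothesis f_grad : has_gradient f g.

Lemma has_gradient_along_line a d t :
  derivable_pt_lim (fun s => f (vadd a (vscale s d))) t
    (inner (g (vadd a (vscale t d))) d).
Proof.
(* Gradient tolerance eps / (|d| + 1) and step bound delta / (|d| + 1): the
   +1 keeps both meaningful when d = 0. *)
move=> eps eps_gt0; set p := vadd a (vscale t d).
have nd_ge0 := norm_ge0 d.
have eps'_gt0 : 0 < eps / (norm d + 1) by apply: Rdiv_lt_0_compat; lra.
have [delta [delta_gt0 Hdelta]] := f_grad p eps'_gt0.
have delta'_gt0 : 0 < delta / (norm d + 1) by apply: Rdiv_lt_0_compat; lra.
exists (mkposreal _ delta'_gt0) => h h_neq0 /= h_small.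
have h_gt0 : 0 < Rabs h by exact: Rabs_pos_lt.
have step : vsub (vadd a (vscale (t + h) d)) p = vscale h d.
  by apply: functional_extensionality => i; rewrite /p /vsub /vadd /vscale; ring.
have close : Rabs h * norm d < delta.
  have : Rabs h * (norm d + 1) < delta.
    have := Rmult_lt_compat_r (norm d + 1) _ _ ltac:(lra) h_small.
    by have -> : delta / (norm d + 1) * (norm d + 1) = delta by field; lra.
  by nra.
have := Hdelta (vadd a (vscale (t + h) d)); rewrite step norm_scale inner_scaler => /(_ close).
set N := _ - _ - _ => N_le.
have -> : (f (vadd a (vscale (t + h) d)) - f p) / h - inner (g p) d = N / h
  by rewrite /N; field.
rewrite /Rdiv Rabs_mult Rabs_inv.
apply: (Rmult_lt_reg_r (Rabs h)) => //.
rewrite Rmult_assoc Rinv_l; last lra.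
set e' := eps / (norm d + 1) in N_le eps'_gt0.
have e'_eq : e' * (norm d + 1) = eps by rewrite /e'; field; lra.
by nra.
Qed.

Hypothesis f_convex : convex_fun f.

(* Along the segment, convexity bounds every difference quotient at 0 by
   f b - f a, hence also the slope <g a, b - a>. *)
Lemma convex_gradient_ineq a b : f a + inner (g a) (vsub b a) <= f b.
Proof.
set d := vsub b a; set phi := fun s => f (vadd a (vscale s d)).
have phi0 : phi 0 = f a.
  by rewrite /phi; congr f; apply: functional_extensionality => i; rewrite /vadd /vscale; ring.
have phi_convex s : 0 <= s <= 1 -> phi s <= s * f b + (1 - s) * f a.
  move=> s01; rewrite /phi.
  have -> : vadd a (vscale s d) = vadd (vscale s b) (vscale (1 - s) a).
    by apply: functional_extensionality => i; rewrite /vadd /vscale /d /vsub; ring.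
  exact: f_convex.
have := has_gradient_along_line a d 0; rewrite -/phi.
have -> : vadd a (vscale 0 d) = a.
  by apply: functional_extensionality => i; rewrite /vadd /vscale; ring.
set D := inner (g a) d => phi'0.
apply: Rnot_lt_le => gap.
have [[delta delta_gt0] Hdelta] := phi'0 _ (ltac:(lra) : 0 < (f a + D - f b) / 2).
set s := Rmin (delta / 2) (1 / 2).
have s_gt0 : 0 < s by apply: Rmin_pos; lra.
have s_le : s <= 1 / 2 /\ s <= delta / 2 by split; [apply: Rmin_r | apply: Rmin_l].
have := Hdelta s ltac:(lra) ltac:(rewrite /= Rabs_pos_eq; lra).
rewrite Rplus_0_l phi0 => /Rabs_def2 [_ slope_gt].
have : (phi s - f a) / s <= f b - f a.
  apply: (Rmult_le_reg_r s) => //.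
  have -> : (phi s - f a) / s * s = phi s - f a by field; lra.
  by have := phi_convex s ltac:(lra); nra.
lra.
Qed.

End Gradient.

Section DescentLemma.
Variables (n : nat) (f : vec n -> R) (g : vec n -> vec n) (l u : vec n) (L : R).
Hypotheses (f_grad : has_gradient f g) (L_gt0 : 0 < L).
Hypothesis g_lipschitz : forall z1 z2, in_box l u z1 -> in_box l u z2 ->
  norm (vsub (g z1) (g z2)) <= L * norm (vsub z1 z2).

Lemma in_box_segment y x s : in_box l u y -> in_box l u x -> 0 <= s <= 1 ->
  in_box l u (vadd y (vscale s (vsub x y))).
Proof.
move=> y_box x_box s01 i; have := y_box i; have := x_box i.
rewrite /vadd /vscale /vsub; nra.
Qed.

Lemma inner_gradient_segment_le y x s :
  in_box l u y -> in_box l u x -> 0 <= s <= 1 ->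
  inner (g (vadd y (vscale s (vsub x y)))) (vsub x y) <=
  inner (g y) (vsub x y) + L * s * norm (vsub x y) ^ 2.
Proof.
move=> y_box x_box s01; set d := vsub x y; set p := vadd y (vscale s d).
have p_box : in_box l u p by exact: in_box_segment.
have py : vsub p y = vscale s d.
  by apply: functional_extensionality => i; rewrite /p /vsub /vadd /vscale; ring.
have := inner_le_mul_norm (vsub (g p) (g y)) d.
have := g_lipschitz p_box y_box; rewrite py norm_scale Rabs_pos_eq; last lra.
rewrite inner_subl; have := norm_ge0 d; have := norm_ge0 (vsub (g p) (g y)).
by nra.
Qed.

(* Mean value theorem applied to
   s |-> f (y + s (x - y)) - <g y, x - y> s - L/2 |x - y|^2 s^2,
   whose derivative is nonpositive on [0, 1]. *)
Lemma descent_lemma y x : in_box l u y -> in_box l u x ->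
  f x <= f y + inner (g y) (vsub x y) + L / 2 * norm (vsub x y) ^ 2.
Proof.
move=> y_box x_box; set d := vsub x y; set A := inner (g y) d.
set c := L / 2 * norm d ^ 2.
set phi := fun s => f (vadd y (vscale s d)).
set psi := fun s => phi s - (A * s + c * (s * s)).
set psi' := fun s => inner (g (vadd y (vscale s d))) d - (A * 1 + c * (1 * s + s * 1)).
have psi_deriv s : 0 <= s <= 1 -> derivable_pt_lim psi s (psi' s).
  move=> _; apply: (derivable_pt_lim_minus phi (fun s => A * s + c * (s * s))).
    exact: has_gradient_along_line.
  apply: (derivable_pt_lim_plus (mult_real_fct A id) (mult_real_fct c (mult_fct id id))).
    exact/derivable_pt_lim_scal/derivable_pt_lim_id.
  by apply: derivable_pt_lim_scal; apply: derivable_pt_lim_mult; exact: derivable_pt_lim_id.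
have [s [mvt s01]] := MVT_cor2 psi psi' 0 1 Rlt_0_1 psi_deriv.
have psi'_le0 : psi' s <= 0.
  have := inner_gradient_segment_le y_box x_box (conj (Rlt_le _ _ s01.1) (Rlt_le _ _ s01.2)).
  by rewrite /psi' /c /A -/d; nra.
have phi0 : phi 0 = f y.
  by rewrite /phi; congr f; apply: functional_extensionality => i; rewrite /vadd /vscale; ring.
have phi1 : phi 1 = f x.
  by rewrite /phi; congr f; apply: functional_extensionality => i; rewrite /vadd /vscale /d /vsub; ring.
by move: mvt; rewrite /psi phi0 phi1 /c; lra.
Qed.

Lemma subobj_expand lam mu y x :
  subobj lam L mu g y x =
  lam * INR (l0 x) + (L + mu) / 2 * norm (vsub x y) ^ 2 + inner (g y) (vsub x y)
  + / (2 * L) * norm (g y) ^ 2.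
Proof.
rewrite /subobj.
change (fun i => x i - y i + / L * g y i) with (vadd (vsub x y) (vscale (/ L) (g y))).
by rewrite norm_add_scale_sqr inner_comm; field; lra.
Qed.

Lemma subproblem_sufficient_decrease lam mu y x :
  in_box l u y -> in_box l u x -> subobj lam L mu g y x <= subobj lam L mu g y y ->
  lam * INR (l0 x) + f x + mu / 2 * norm (vsub x y) ^ 2 <= lam * INR (l0 y) + f y.
Proof.
move=> y_box x_box.
have yy0 : vsub y y = vscale 0 y.
  by apply: functional_extensionality => i; rewrite /vsub /vscale; ring.
rewrite !subobj_expand yy0 norm_scale inner_scaler Rabs_R0 !Rmult_0_l.
by have := descent_lemma y_box x_box; lra.
Qed.

End DescentLemma.

Lemma Req_bP a b : reflect (a = b) (Req_b a b).
Proof. by rewrite /Req_b; case: Req_EM_T => h; constructor. Qed.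

Lemma l0_extrap_le n w (xk xp : vec n) : (l0 (extrap w xk xp) <= l0 xk)%N.
Proof.
apply: leq_sum => i _; rewrite /extrap.
case: (Req_bP (xk i) 0) => [xk0 | _]; last by case: ifP.
by rewrite xk0; case: Req_bP.
Qed.

Lemma Hfun_in_box n lam (f : vec n -> R) l u x :
  in_box l u x -> Hfun lam f l u x = Fin (lam * INR (l0 x) + f x).
Proof.
move=> x_box; rewrite /Hfun; have -> // : in_box_b l u x = true.
apply/forallP => i; have := x_box i; rewrite /Rle_b.
by case: Rle_dec; case: Rle_dec => //= ? ?; lra.
Qed.

Lemma safeguarded_point n (f : vec n -> R) g (l u : vec n) (xk yt yk : vec n) :
  convex_fun f -> has_gradient f g -> in_box l u xk -> (l0 yt <= l0 xk)%N ->
  ((inner (vsub yt xk) (g yt) > 0 \/ ~ in_box l u yt) -> yk = xk) ->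
  (~ (inner (vsub yt xk) (g yt) > 0 \/ ~ in_box l u yt) -> yk = yt) ->
  [/\ in_box l u yk, (l0 yk <= l0 xk)%N & f yk <= f xk].
Proof.
move=> f_convex f_grad xk_box yt_l0 reset accept.
case: (classic (inner (vsub yt xk) (g yt) > 0 \/ ~ in_box l u yt)) => [rejected | accepted].
  by rewrite reset //; split=> //; lra.
rewrite accept //; split.
- by apply: NNPP => yt_out; apply: accepted; right.
- exact: yt_l0.
- have not_ascent : inner (vsub yt xk) (g yt) <= 0.
    by apply: Rnot_lt_le => ascent; apply: accepted; left.
  have := convex_gradient_ineq f_grad f_convex yt xk.
  by move: not_ascent; rewrite (inner_comm (g yt)) !inner_subl; lra.
Qed.

Theorem mainTheorem2 (n : nat) (lam L mu wbar : R) (l u : vec n)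
  (f : vec n -> R) (g : vec n -> vec n)
  (om : nat -> R) (x y : nat -> vec n) :
  0 < lam ->
  (forall i, l i <= u i) ->
  convex_fun f ->
  has_gradient f g ->
  (exists m : R, forall z, in_box l u z -> m <= f z) ->
  0 < L ->
  (forall z1 z2, in_box l u z1 -> in_box l u z2 ->
     norm (vsub (g z1) (g z2)) <= L * norm (vsub z1 z2)) ->
  0 < mu ->
  wbar < 1 ->
  (forall k, 0 <= om k <= wbar) ->
  in_box l u (x 0%nat) ->
  (forall k : nat,
     let xprev := if k is k'.+1 then x k' else x 0%nat in
     let yt := extrap (om k) (x k) xprev in
     ((inner (vsub yt (x k)) (g yt) > 0 \/ ~ in_box l u yt) -> y k.+1 = x k) /\
     (~ (inner (vsub yt (x k)) (g yt) > 0 \/ ~ in_box l u yt) -> y k.+1 = yt)) ->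
  (forall k : nat,
     in_box l u (x k.+1) /\
     forall z, in_box l u z ->
       subobj lam L mu g (y k.+1) (x k.+1) <= subobj lam L mu g (y k.+1) z) ->
  forall k : nat,
    in_box l u (y k.+1) /\
    (l0 (y k.+1) <= l0 (x k))%N /\
    f (y k.+1) <= f (x k) /\
    ele (eadd (Hfun lam f l u (x k.+1)) (mu / 2 * (norm (vsub (x k.+1) (y k.+1))) ^ 2))
        (Hfun lam f l u (x k)).
Proof.
move=> lam_gt0 _ f_convex f_grad _ L_gt0 g_lipschitz _ _ _ x0_box y_step x_step k.
have x_box j : in_box l u (x j) by case: j => [|j] //; case: (x_step j).
have [reset accept] := y_step k.
have [y_box y_l0 y_f] :=
  safeguarded_point f_convex f_grad (x_box k) (l0_extrap_le _ _ _) reset accept.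
have [x1_box x1_min] := x_step k.
have decrease := subproblem_sufficient_decrease f_grad L_gt0 g_lipschitz
  y_box x1_box (x1_min _ y_box).
have l0_decrease : lam * INR (l0 (y k.+1)) <= lam * INR (l0 (x k)).
  by apply: Rmult_le_compat_l; [lra | apply/le_INR/leP].
do 3 (split=> //); rewrite !Hfun_in_box //=; lra.
Qed.
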